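(* Let $p$ be an odd prime, let $n\ge 1$ and $0\le k\le n$, and let $\mathcal S\subseteq \mathbb Z_p^{2n}$ be an isotropic subspace of dimension $n-k$. Let $\hat\rho$ be any single-qudit density matrix on $\mathbb C^p$. Then the probability of successfully projecting $\hat\rho^{\otimes n}$ onto the trivial-syndrome codespace of $\mathcal S$ equals the complete weight enumerator of $\mathcal S^\perp$ evaluated at the entries of the Wigner function of $\hat\rho$: $$\operatorname{tr}\!\left(\hat\Pi^0_{\mathcal S}\,\hat\rho^{\otimes n}\right)=w\big(\mathcal S^\perp;\{W(\hat\rho;i,j)\}\big)=\sum_{(\vec u|\vec v)\in\mathcal S^\perp}\ \prod_{i=1}^n W(\hat\rho;u_i,v_i).$$
   Context: Let $p$ be an odd prime, $\omega=e^{2\pi i/p}$, and $2^{-1}$ the inverse of $2$ in $\mathbb Z_p$. On $\mathbb C^p$ with basis $\{|k\rangle\}_{k\in\mathbb Z_p}$ let $\hat X=\sum_k|k+1\rangle\langle k|$, $\hat Z=\sum_k\omega^k|k\rangle\langle k|$, and $\hat D(u,v)=\omega^{-2^{-1}uv}\hat X^u\hat Z^v$ for $u,v\in\mathbb Z_p$. For $\chi=(\vec u|\vec v)\in\mathbb Z_p^{2n}$ (with $\vec u,\vec v\in\mathbb Z_p^n$) let $\hat D(\chi)=\hat D(u_1,v_1)\otimes\cdots\otimes\hat D(u_n,v_n)$. The symplectic form is $[\chi,\chi']=\vec u\cdot\vec v'-\vec u'\cdot\vec v$. A subspace $\mathcal S\subseteq\mathbb Z_p^{2n}$ is isotropic if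 $[\chi,\chi']=0$ for all $\chi,\chi'\in\mathcal S$; it is identified with the stabilizer group $\{\hat D(\chi):\chi\in\mathcal S\}$. Define $\mathcal S^\perp=\{\chi\in\mathbb Z_p^{2n}:[\chi,\sigma]=0\ \forall\sigma\in\mathcal S\}$, and the trivial-syndrome projector $\hat\Pi^0_{\mathcal S}=p^{-(n-k)}\sum_{\chi\in\mathcal S}\hat D(\chi)$. Phase point operators: $\hat A(0,0)=p^{-1}\sum_{u,v\in\mathbb Z_p}\hat D(u,v)$, $\hat A(u,v)=\hat D(u,v)\hat A(0,0)\hat D(u,v)^\dagger$. The discrete Wigner function of a single-qudit state is $W(\hat\rho;u,v)=p^{-1}\operatorname{tr}(\hat\rho\hat A(u,v))$. For a subset $T\subseteq\mathbb Z_p^{2n}$ and numbers $\{y_{ij}\}_{i,j\in\mathbb Z_p}$, the complete weight enumerator is $w(T;\{y_{ij}\})=\sum_{(\vec u|\vec v)\in T}\prod_{i=1}^n y_{u_i,v_i}$. *)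

From HB Require Import structures.
From mathcomp Require Import all_boot all_order all_algebra.
From mathcomp Require Import reals trigo.
From mathcomp Require Import complex.
Set Implicit Arguments. Unset Strict Implicit. Unset Printing Implicit Defensive.
Import Order.TTheory GRing.Theory Num.Theory.
Local Open Scope ring_scope.

Section Qudits.
Variables (R : realType) (p : nat).

Local Notation C := (R[i]).
Local Notation Fp := ('F_p).

Definition omega : C := Complex (cos (2 * pi / p%:R)) (sin (2 * pi / p%:R)).

(* omega^m for m in Z_p (well defined since omega^p = 1) *)
Definition omegaZ (m : Fp) : C := omega ^+ (val m).

(* linear operators on C^T, for a finite basis type T, as matrices T x T *)
Definition op (T : finType) := T -> T -> C.
Definition opmul (T : finType) (A B : op T) : op T :=
  fun x y => \sum_(z : T) A x z * B z y.
Definition opid (T : finType) : op T := fun x y => (x == y)%:R.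
Definition opexp (T : finType) (A : op T) (m : nat) : op T :=
  iter m (opmul A) (@opid T).
Definition opadj (T : finType) (A : op T) : op T := fun x y => (A y x)^*.
Definition optr (T : finType) (A : op T) : C := \sum_(x : T) A x x.

(* single-qudit operators on C^p, basis {|k> : k in Z_p} *)
Definition Xop : op Fp := fun a b => (a == b + 1)%:R.
Definition Zop : op Fp := fun a b => (a == b)%:R * omegaZ b.
Definition Dop (u v : Fp) : op Fp :=
  fun a b => omegaZ (- ((2%:R)^-1 * u * v)) * opmul (opexp Xop (val u)) (opexp Zop (val v)) a b.

Definition A00 : op Fp := fun a b => (p%:R)^-1 * \sum_(u : Fp) \sum_(v : Fp) Dop u v a b.
Definition Aop (u v : Fp) : op Fp := opmul (opmul (Dop u v) A00) (opadj (Dop u v)).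

Definition Wigner (rho : op Fp) (u v : Fp) : C := (p%:R)^-1 * optr (opmul rho (Aop u v)).

Definition density (rho : op Fp) : Prop :=
  (forall a b, rho a b = (rho b a)^*) /\
  (forall psi : Fp -> C, 0 <= \sum_(a : Fp) \sum_(b : Fp) (psi a)^* * rho a b * psi b) /\
  optr rho = 1.

Section NQudits.
Variable n : nat.

Definition basis := {ffun 'I_n -> Fp}.

Definition tens (F : 'I_n -> op Fp) : op basis :=
  fun x y => \prod_(i < n) F i (x i) (y i).

Definition tensn (A : op Fp) : op basis := tens (fun _ => A).

Definition symv := 'rV[Fp]_(n + n).
Definition uvec (chi : symv) : 'rV[Fp]_n := lsubmx chi.
Definition vvec (chi : symv) : 'rV[Fp]_n := rsubmx chi.

Definition sympl (chi chi' : symv) : Fp :=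
  \sum_(i < n) (uvec chi 0 i * vvec chi' 0 i - uvec chi' 0 i * vvec chi 0 i).

Definition isotropic (S : {vspace symv}) : Prop :=
  forall chi chi', chi \in S -> chi' \in S -> sympl chi chi' = 0.

Definition sperp (S : {vspace symv}) : {set symv} :=
  [set chi : symv | [forall sigma : symv, (sigma \in S) ==> (sympl chi sigma == 0)]].

Definition Dn (chi : symv) : op basis :=
  tens (fun i => Dop (uvec chi 0 i) (vvec chi 0 i)).

(* trivial-syndrome projector, with |S| = p^(n-k) *)
Definition Pi0 (k : nat) (S : {vspace symv}) : op basis :=
  fun x y => (p%:R ^- (n - k)) * \sum_(chi : symv | chi \in S) Dn chi x y.

Definition cwe (T : {set symv}) (y : Fp -> Fp -> C) : C :=
  \sum_(chi in T) \prod_(i < n) y (uvec chi 0 i) (vvec chi 0 i).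

End NQudits.
End Qudits.

From HB Require Import structures.
From mathcomp Require Import all_boot all_order all_algebra finfield.
From mathcomp Require Import reals trigo.
From mathcomp Require Import complex.
From mathcomp Require Import ring.
Import Order.TTheory GRing.Theory Num.Theory.
Local Open Scope ring_scope.

(** Writing the projector as [p^-(n-k) \sum_(chi in S) D(chi)], the trace
    against [rho^(x)n] factorises over the qudits into products of
    [tr (D(u_i, v_i) rho)].  Each factor is the symplectic Fourier transform
    of the Wigner function, [tr (D(c) rho) = \sum_(u,v) W(u,v) omega^[(u,v), c]].
    Expanding the product and exchanging the sums leaves, for every
    [a = (u|v)], the character sum [\sum_(chi in S) omega^[a, chi]], which is
    [|S| = p^(n-k)] if [a] is in [S^perp] and [0] otherwise. *)

Lemma sumr_eq0_of_scaled_shift {C : comUnitRingType} {T : finType} {P : pred T}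
    {F : T -> C} (g : T -> T) (c : C) :
  injective g -> (forall x, P (g x) = P x) -> (forall x, F (g x) = c * F x) ->
  (1 - c) \is a GRing.unit -> \sum_(x | P x) F x = 0.
Proof.
move=> g_inj Pg Fg c_unit.
have sumF : \sum_(x | P x) F x = c * \sum_(x | P x) F x.
  rewrite {1}(reindex_inj g_inj) /= mulr_sumr.
  by apply: eq_big => [x|x _]; rewrite ?Pg ?Fg.
apply: (mulrI c_unit).
by rewrite mulr0 mulrBl mul1r -sumF subrr.
Qed.

Lemma sumr_indicator {C : pzRingType} {T : finType} (t0 : T) (F : T -> C) :
  \sum_(z : T) (z == t0)%:R * F z = F t0.
Proof.
rewrite (bigD1 t0) //= eqxx mul1r big1 ?addr0 // => z /negbTE ->.
by rewrite mul0r.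
Qed.

Lemma eq_addr_subr {V : zmodType} (a z u : V) : (a == z + u) = (z == a - u).
Proof. by apply/eqP/eqP => ->; rewrite ?addrK ?subrK. Qed.

Lemma exchange_big_pairs (V : nmodType) (I J : finType) (F : I -> I -> J -> J -> V) :
  \sum_(u : I) \sum_(v : I) \sum_(x : J) \sum_(y : J) F u v x y =
  \sum_(x : J) \sum_(y : J) \sum_(u : I) \sum_(v : I) F u v x y.
Proof.
under eq_bigr => u _ do rewrite exchange_big.
under eq_bigr => u _ do under eq_bigr => x _ do rewrite exchange_big.
rewrite exchange_big.
by under eq_bigr => x _ do rewrite exchange_big.
Qed.

Section Qudit.
Context {R : realType} {p : nat} (p_prime : prime p) (p_odd : odd p).

Local Notation C := (R[i]).
Local Notation Fp := ('F_p).
Local Notation w := (omega R p).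
Local Notation e := (@omegaZ R p).
Local Notation half := ((2%:R : Fp)^-1).

Lemma mul_Complex (a b c d : R) :
  Complex a b * Complex c d = Complex (a * c - b * d) (a * d + b * c) :> C.
Proof. by []. Qed.

Lemma omegaX m :
  w ^+ m = Complex (cos (m%:R * (2 * pi / p%:R))) (sin (m%:R * (2 * pi / p%:R))).
Proof.
elim: m => [|m IH]; first by rewrite expr0 !mul0r cos0 sin0.
rewrite exprSr IH /omega mul_Complex; set t := (_ / _ : R).
rewrite -[m.+1]addn1 natrD mulrDl mul1r cosD sinD.
by congr Complex; ring.
Qed.

Lemma prime_odd_gt2 : (2 < p)%N.
Proof.
have := prime_gt1 p_prime; rewrite leq_eqVlt => /orP[/eqP p2|//].
by move: p_odd; rewrite -p2.
Qed.

Lemma natr_p_neq0 (F : numFieldType) : (p%:R : F) != 0.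
Proof. by rewrite pnatr_eq0 -lt0n (ltn_trans _ prime_odd_gt2). Qed.

Lemma omega_p : w ^+ p = 1.
Proof. by rewrite omegaX mulrC divfK ?natr_p_neq0 // mulr_natl cos2pi sin2pi. Qed.

(* [sin (2 pi / p) > 0] because [0 < 2 pi / p < pi] for [p > 2]. *)
Lemma omega_neq1 : w != 1.
Proof.
rewrite /omega; apply/negP; rewrite eq_complex /= => /andP[_].
have p_gt0 : (0 < p)%N by rewrite (ltn_trans _ prime_odd_gt2).
rewrite gt_eqF //; apply: sin_gt0_pi; apply/andP; split.
  by rewrite divr_gt0 ?mulr_gt0 ?pi_gt0 // ltr0n.
rewrite ltr_pdivrMr ?ltr0n // mulrC ltr_pM2l ?pi_gt0 // ltr_nat.
exact: prime_odd_gt2.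
Qed.

Lemma omega_mul_conj : w * w^* = 1.
Proof.
rewrite /omega; set t := (2 * pi / p%:R).
have -> : (Complex (cos t) (sin t))^* = Complex (cos t) (- sin t) by [].
rewrite mul_Complex; apply/eqP; rewrite eq_complex /=; apply/andP; split; apply/eqP.
  by rewrite mulrN opprK -!expr2 cos2Dsin2.
by rewrite mulrN addrC mulrC subrr.
Qed.

Lemma omegaZ_nat m : e m%:R = w ^+ m.
Proof.
by rewrite /omegaZ -[val _]/(nat_of_ord _) val_Fp_nat // (expr_mod _ omega_p).
Qed.

Lemma omegaZD x y : e (x + y) = e x * e y.
Proof. by have := omegaZ_nat (val x + val y); rewrite natrD !natr_Zp exprD. Qed.

Lemma omegaZ0 : e 0 = 1.
Proof. by rewrite /omegaZ expr0. Qed.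

Lemma omegaZ_sum (I : finType) (F : I -> Fp) : e (\sum_i F i) = \prod_i e (F i).
Proof. exact: (big_morph _ omegaZD omegaZ0). Qed.

Lemma omegaZN_mul x : e (- x) * e x = 1.
Proof. by rewrite -omegaZD addNr omegaZ0. Qed.

Lemma omegaZ_neq0 x : e x != 0.
Proof.
apply/negP => /eqP ex0; have := omegaZN_mul x.
by rewrite ex0 mulr0 => /eqP; rewrite eq_sym oner_eq0.
Qed.

Lemma omegaZ_conj x : (e x)^* = e (- x).
Proof.
have ex_conj : e x * (e x)^* = 1.
  by rewrite /omegaZ rmorphXn /= -exprMn omega_mul_conj expr1n.
by apply: (mulfI (omegaZ_neq0 x)); rewrite ex_conj mulrC omegaZN_mul.
Qed.

Lemma omegaZX x m : e x ^+ m = e (m%:R * x).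
Proof.
elim: m => [|m IH]; first by rewrite expr0 mul0r omegaZ0.
by rewrite exprS IH -omegaZD -[m.+1]addn1 natrD mulrDl mul1r addrC.
Qed.

Lemma omegaZ_neq1 x : x != 0 -> e x != 1.
Proof.
move=> x_neq0; apply/negP => /eqP ex1.
have := omegaZX x (val x^-1); rewrite natr_Zp mulVf // ex1 expr1n => /esym.
by rewrite -[1]/(1%:R) omegaZ_nat expr1 => /eqP; rewrite (negbTE omega_neq1).
Qed.

Lemma unit_1B_omegaZ x : x != 0 -> (1 - e x) \is a GRing.unit.
Proof. by move=> x_neq0; rewrite unitfE subr_eq0 eq_sym omegaZ_neq1. Qed.

Lemma sum_omegaZ (a : Fp) : \sum_(x : Fp) e (a * x) = if a == 0 then p%:R else 0.
Proof.
have [->|a_neq0] := eqVneq a 0.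
  by under eq_bigr do rewrite mul0r omegaZ0; rewrite sumr_const card_Fp.
apply: (sumr_eq0_of_scaled_shift (fun x => x + 1) (e a)) => //.
- exact: addIr.
- by move=> x; rewrite mulrDr mulr1 omegaZD mulrC.
- exact: unit_1B_omegaZ.
Qed.

Lemma opexpXE m (a b : Fp) : opexp (@Xop R p) m a b = (a == b + m%:R)%:R.
Proof.
elim: m a b => [|m IH] a b; first by rewrite /opexp /= /opid addr0.
rewrite /opexp iterS -/(opexp _ m) /opmul.
under eq_bigr do rewrite /Xop eq_addr_subr IH.
by rewrite sumr_indicator -natr1 addrA (eq_addr_subr a) eq_sym.
Qed.

Lemma opexpZE m (a b : Fp) : opexp (@Zop R p) m a b = (a == b)%:R * e b ^+ m.
Proof.
elim: m a b => [|m IH] a b; first by rewrite /opexp /= /opid expr0 mulr1.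
rewrite /opexp iterS -/(opexp _ m) /opmul.
under eq_bigr do rewrite /Zop IH eq_sym -mulrA.
rewrite sumr_indicator exprS.
by case: eqP => [->|_]; rewrite ?mul0r ?mulr0 // !mul1r.
Qed.

Lemma DopE (u v a b : Fp) :
  Dop R u v a b = e (- (half * u * v)) * (a == b + u)%:R * e (v * b).
Proof.
rewrite /Dop /opmul -[RHS]mulrA; congr (_ * _).
under eq_bigr do rewrite opexpXE opexpZE natr_Zp eq_addr_subr.
by rewrite sumr_indicator omegaZX natr_Zp (eq_addr_subr a) eq_sym.
Qed.

Lemma A00E (a b : Fp) : @A00 R p a b = (b - half * (a - b) == 0)%:R.
Proof.
rewrite /A00; set c := b - half * (a - b).
have -> : \sum_u \sum_v Dop R u v a b = \sum_(v : Fp) e (c * v).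
  rewrite (eq_bigr (fun u => (u == a - b)%:R * \sum_(v : Fp) e (c * v))).
    exact: sumr_indicator.
  move=> u _; rewrite mulr_sumr; apply: eq_bigr => v _.
  rewrite DopE (addrC b u) (eq_addr_subr a).
  case: eqP => [->|_]; last by rewrite !(mulr0, mul0r).
  by rewrite mulr1 mul1r -omegaZD; congr e; rewrite /c; ring.
rewrite sum_omegaZ; case: eqP => _; last by rewrite mulr0.
by rewrite mulVf // natr_p_neq0.
Qed.

Lemma AopE (u v a b : Fp) :
  Aop R u v a b = e (v * (a - b)) * ((b - u) - half * ((a - u) - (b - u)) == 0)%:R.
Proof.
rewrite /Aop /opmul /opadj; set g := e (- (half * u * v)).
have DA00 y : \sum_z Dop R u v a z * @A00 R p z y = g * e (v * (a - u)) * @A00 R p (a - u) y.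
  rewrite (eq_bigr (fun z => (z == a - u)%:R * (g * e (v * z) * @A00 R p z y))).
    exact: sumr_indicator.
  by move=> z _; rewrite DopE -/g (eq_addr_subr a); case: eqP => _ /=; ring.
under eq_bigr do rewrite DA00.
rewrite (eq_bigr (fun y => (y == b - u)%:R *
    (g * e (v * (a - u)) * @A00 R p (a - u) y * (g * e (v * y))^*))); last first.
  move=> y _; rewrite DopE -/g (eq_addr_subr b) !rmorphM rmorph_nat /=.
  by case: eqP => _ /=; ring.
rewrite sumr_indicator A00E rmorphM /= !omegaZ_conj.
have -> : e (v * (a - b)) = g * e (v * (a - u)) * e (- - (half * u * v)) * e (- (v * (b - u))).
  by rewrite -!omegaZD; congr e; ring.
ring.
Qed.

Lemma WignerE (rho : op R Fp) u v :
  Wigner rho u v = (p%:R)^-1 *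
    \sum_(x : Fp) \sum_(y : Fp) rho x y * e (v * (y - x)) * (u == x - half * (y - x))%:R.
Proof.
rewrite /Wigner /optr /opmul; congr (_ * _); apply: eq_bigr => x _.
apply: eq_bigr => y _; rewrite AopE mulrA; congr (_ * (nat_of_bool _)%:R).
apply/eqP/eqP => supp; last by rewrite supp; ring.
have -> : u = x - half * (y - x) - ((x - u) - half * ((y - u) - (x - u))) by ring.
by rewrite supp subr0.
Qed.

Lemma trace_Dop (rho : op R Fp) c1 c2 :
  optr (opmul (Dop R c1 c2) rho) = \sum_(x : Fp) e (c2 * (x - half * c1)) * rho x (x + c1).
Proof.
rewrite /optr /opmul exchange_big /=; apply: eq_bigr => b _.
rewrite (eq_bigr (fun a => (a == b + c1)%:R * (e (- (half * c1 * c2)) * e (c2 * b) * rho b a))).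
  by rewrite sumr_indicator -omegaZD; congr (e _ * _); ring.
by move=> a _; rewrite DopE; ring.
Qed.

(* Summing the phase [e (v * (y - x - c1))] over [v] forces [y = x + c1],
   and then [u] is forced to [x - c1 / 2]. *)
Lemma sum_Wigner_phase (rho : op R Fp) c1 c2 x y :
  \sum_(u : Fp) \sum_(v : Fp)
     rho x y * e (v * (y - x)) * (u == x - half * (y - x))%:R * e (c2 * u - c1 * v) =
  (y == x + c1)%:R * (p%:R * (rho x y * e (c2 * (x - half * (y - x))))).
Proof.
set u0 := x - half * (y - x).
rewrite (eq_bigr (fun u => (u == u0)%:R *
    (rho x y * e (c2 * u) * \sum_(v : Fp) e ((y - x - c1) * v)))); last first.
  move=> u _; rewrite !mulr_sumr; apply: eq_bigr => v _.
  have phase : e (v * (y - x)) * e (c2 * u - c1 * v) = e (c2 * u) * e ((y - x - c1) * v).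
    by rewrite -!omegaZD; congr e; ring.
  transitivity ((u == u0)%:R * (rho x y * (e (v * (y - x)) * e (c2 * u - c1 * v)))).
    by ring.
  by rewrite phase; ring.
rewrite sumr_indicator sum_omegaZ subr_eq0 subr_eq [c1 + x]addrC.
by case: eqP => _ /=; ring.
Qed.

Lemma trace_Dop_Wigner (rho : op R Fp) c1 c2 :
  optr (opmul (Dop R c1 c2) rho) =
  \sum_(u : Fp) \sum_(v : Fp) Wigner rho u v * e (c2 * u - c1 * v).
Proof.
have expand : \sum_(u : Fp) \sum_(v : Fp) Wigner rho u v * e (c2 * u - c1 * v) =
    (p%:R)^-1 * \sum_(u : Fp) \sum_(v : Fp) \sum_(x : Fp) \sum_(y : Fp)
      rho x y * e (v * (y - x)) * (u == x - half * (y - x))%:R * e (c2 * u - c1 * v).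
  rewrite mulr_sumr; apply: eq_bigr => u _; rewrite mulr_sumr; apply: eq_bigr => v _.
  rewrite WignerE -mulrA mulr_suml; congr (_ * _); apply: eq_bigr => x _.
  by rewrite mulr_suml.
rewrite expand exchange_big_pairs trace_Dop mulr_sumr; apply: eq_bigr => x _.
rewrite (eq_bigr _ (fun y _ => sum_Wigner_phase rho c1 c2 x y)) sumr_indicator.
rewrite [RHS]mulrA mulVf ?natr_p_neq0 // mul1r mulrC.
by congr (_ * e _); ring.
Qed.

Lemma trace_scaled_sum_mul (T I : finType) (P : pred I) (c : C)
    (M : I -> op R T) (B : op R T) :
  optr (opmul (fun x y => c * \sum_(j | P j) M j x y) B) =
  c * \sum_(j | P j) optr (opmul (M j) B).
Proof.
rewrite /optr /opmul.
under eq_bigr => x _ do under eq_bigr => z _ do rewrite -mulrA mulr_suml.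
under eq_bigr => x _ do rewrite -mulr_sumr.
rewrite -mulr_sumr; congr (_ * _).
under eq_bigr => x _ do rewrite exchange_big /=.
by rewrite exchange_big.
Qed.

Context {n : nat}.

Lemma trace_tens (F G : 'I_n -> op R Fp) :
  optr (opmul (tens F) (tens G)) = \prod_i optr (opmul (F i) (G i)).
Proof.
rewrite /optr /opmul /tens.
rewrite (eq_bigr (fun x : basis p n => \prod_i \sum_b F i (x i) b * G i b (x i))); last first.
  by move=> x _; rewrite bigA_distr_bigA; apply: eq_bigr => z _; rewrite big_split.
by rewrite -(bigA_distr_bigA (fun i a => \sum_b F i a b * G i b a)).
Qed.

Lemma trace_Pi0_tensn k (S : {vspace symv p n}) (rho : op R Fp) :
  optr (opmul (@Pi0 R p n k S) (tensn rho)) =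
  p%:R ^- (n - k) * \sum_(chi : symv p n | chi \in S)
    \prod_i optr (opmul (Dop R (uvec chi 0 i) (vvec chi 0 i)) rho).
Proof.
rewrite /Pi0 trace_scaled_sum_mul; congr (_ * _).
by apply: eq_bigr => chi _; rewrite trace_tens.
Qed.

Definition symv_of (f : {ffun 'I_n -> Fp * Fp}) : symv p n :=
  row_mx (\row_i (f i).1) (\row_i (f i).2).

Lemma uvec_symv_of f i : uvec (symv_of f) 0 i = (f i).1.
Proof. by rewrite /uvec /symv_of row_mxKl mxE. Qed.

Lemma vvec_symv_of f i : vvec (symv_of f) 0 i = (f i).2.
Proof. by rewrite /vvec /symv_of row_mxKr mxE. Qed.

Lemma symv_of_bij : bijective symv_of.
Proof.
exists (fun chi => [ffun i => (uvec chi 0 i, vvec chi 0 i)]).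
  by move=> f; apply/ffunP => i; rewrite ffunE uvec_symv_of vvec_symv_of; case: (f i).
move=> chi; rewrite /symv_of -[RHS](hsubmxK chi).
by congr row_mx; apply/rowP => i; rewrite mxE ffunE.
Qed.

Lemma prod_trace_Dop_Wigner (chi : symv p n) (rho : op R Fp) :
  \prod_i optr (opmul (Dop R (uvec chi 0 i) (vvec chi 0 i)) rho) =
  \sum_(f : {ffun 'I_n -> Fp * Fp})
    (\prod_i Wigner rho (f i).1 (f i).2) * e (sympl (symv_of f) chi).
Proof.
under eq_bigr => i _ do rewrite trace_Dop_Wigner pair_bigA /=.
rewrite bigA_distr_bigA /=; apply: eq_bigr => f _.
rewrite big_split /= /sympl omegaZ_sum; congr (_ * _); apply: eq_bigr => i _.
by rewrite uvec_symv_of vvec_symv_of; congr e; ring.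
Qed.

Lemma symplDr (a x y : symv p n) : sympl a (x + y) = sympl a x + sympl a y.
Proof.
rewrite /sympl /uvec /vvec -big_split; apply: eq_bigr => i _.
by rewrite !linearD !mxE /=; ring.
Qed.

Lemma sum_omegaZ_sympl (S : {vspace symv p n}) a :
  \sum_(chi : symv p n | chi \in S) e (sympl a chi) =
  if a \in sperp S then (p ^ \dim S)%:R else 0.
Proof.
case: ifP => a_perp.
  rewrite (eq_bigr (fun=> 1)) => [|chi chiS]; first by rewrite sumr_const card_vspace card_Fp.
  by move: a_perp; rewrite inE => /forallP/(_ chi)/implyP/(_ chiS)/eqP ->; rewrite omegaZ0.
move: a_perp; rewrite inE => /negbT/forallPn[sigma].
rewrite negb_imply => /andP[sigmaS a_sigma].
apply: (sumr_eq0_of_scaled_shift (fun chi => chi + sigma) (e (sympl a sigma))).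
- exact: addIr.
- move=> chi; apply/idP/idP => [chi_sigmaS|chiS]; last exact: memvD.
  by have := memvB chi_sigmaS sigmaS; rewrite addrK.
- by move=> chi; rewrite symplDr omegaZD mulrC.
- exact: unit_1B_omegaZ.
Qed.

End Qudit.

Theorem theorem1 (R : realType) (p : nat) (n k : nat)
    (S : {vspace symv p n}) (rho : op R 'F_p) :
  prime p -> odd p -> (1 <= n)%N -> (k <= n)%N ->
  @isotropic p n S -> \dim S = (n - k)%N ->
  @density R p rho ->
  optr (opmul (@Pi0 R p n k S) (@tensn R p n rho))
  = @cwe R p n (@sperp p n S) (@Wigner R p rho).
Proof.
move=> p_prime p_odd _ _ _ dimS _.
rewrite trace_Pi0_tensn.
under eq_bigr => chi _ do rewrite (prod_trace_Dop_Wigner p_prime p_odd).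
rewrite exchange_big /=.
under eq_bigr => f _ do rewrite -mulr_sumr (sum_omegaZ_sympl p_prime p_odd) dimS.
rewrite /cwe (reindex symv_of); last exact: onW_bij symv_of_bij.
rewrite mulr_sumr [in RHS]big_mkcond /=; apply: eq_bigr => f _.
case: ifP => _; last by rewrite !mulr0.
rewrite natrX mulrCA mulVf ?mulr1 ?expf_neq0 ?(natr_p_neq0 p_prime p_odd) //.
by apply: eq_bigr => i _; rewrite uvec_symv_of vvec_symv_of.
Qed.
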